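(* Let $\delta\ge1$, let $G=(V,E,w)$ be a weighted graph, and let $\mathcal{R}$ be the set of constraints $\{i,j|k\}$, over all triples of distinct indices $i,j,k$, such that $w_{ij}>\delta^2\max\{w_{ik},w_{jk}\}$. If $T$ is any binary HC-tree for $V$ consistent with every constraint in $\mathcal{R}$, then $\rho_G(T)\le(\delta^2+1)\rho^*_G$.
   Context: Weights are symmetric, nonnegative, and $0$ on non-edges. An HC-tree for $V=\{v_1,\dots,v_n\}$ is a rooted tree with leaf set $V$. $T$ is consistent with $\{i,j|k\}$ if $\mathrm{LCA}(v_i,v_j)$ is a proper descendant of $\mathrm{LCA}(v_i,v_j,v_k)$ (relation $\{i,j|k\}$ holds in $T$); relation $\{i|j|k\}$ holds if $\mathrm{LCA}(v_i,v_j)=\mathrm{LCA}(v_j,v_k)=\mathrm{LCA}(v_i,v_j,v_k)$. Triplet cost $c_T(i,j,k)$: $w_{ik}+w_{jk}$ if $\{i,j|k\}$; $w_{ij}+w_{jk}$ if $\{i,k|j\}$; $w_{ij}+w_{ik}$ if $\{j,k|i\}$; $w_{ij}+w_{jk}+w_{ik}$ if $\{i|j|k\}$. $\mathrm{TC}_G(T)=\sum c_T(i,j,k)$ and $\mathrm{BC}(G)=\sum\min\{w_{ij}+w_{ik},w_{ij}+w_{jk},w_{ik}+w_{jk}\}$ over unordered triples of distinct indices; $\rho_G(T)=\mathrm{TC}_G(T)/\mathrm{BC}(G)$ (with $0/0=1$, $x/0=+\infty$ for $x>0$), $\rho^*_G=\min_T\rho_G(T)$ over all HC-trees. *)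

From HB Require Import structures.
From mathcomp Require Import all_boot all_order all_algebra.
From mathcomp Require Import boolp classical_sets reals constructive_ereal ereal.
Set Implicit Arguments. Unset Strict Implicit. Unset Printing Implicit Defensive.
Import Order.TTheory GRing.Theory Num.Theory.

Inductive tree (n : nat) : Type :=
  | Leaf of 'I_n
  | Node of seq (tree n).
Arguments Leaf {n}.
Arguments Node {n}.

Section Trees.
Variable n : nat.

Fixpoint leaves (t : tree n) : seq 'I_n :=
  match t with
  | Leaf v => [:: v]
  | Node cs => flatten (map leaves cs)
  end.

Fixpoint subtrees (t : tree n) : seq (tree n) :=
  match t with
  | Leaf _ => [:: t]
  | Node cs => t :: flatten (map subtrees cs)
  end.

Definition strict_subtrees (t : tree n) : seq (tree n) :=
  match t with
  | Leaf _ => [::]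
  | Node cs => flatten (map subtrees cs)
  end.

Fixpoint tree_eqb (s t : tree n) : bool :=
  match s, t with
  | Leaf a, Leaf b => a == b
  | Node cs, Node ds =>
      (fix go (cs ds : seq (tree n)) : bool :=
         match cs, ds with
         | [::], [::] => true
         | c :: cs', d :: ds' => tree_eqb c d && go cs' ds'
         | _, _ => false
         end) cs ds
  | _, _ => false
  end.

Fixpoint nodes_ok (P : nat -> bool) (t : tree n) : bool :=
  match t with
  | Leaf _ => true
  | Node cs => P (size cs) && all (nodes_ok P) cs
  end.

(* HC-tree for V: a rooted tree whose leaves are exactly V, each once
   (internal nodes have at least one child, so every leaf is a vertex). *)
Definition HC_tree (t : tree n) : bool :=
  perm_eq (leaves t) (enum 'I_n) && nodes_ok (fun k => 0 < k) t.

Definition binary_HC_tree (t : tree n) : bool :=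
  HC_tree t && nodes_ok (fun k => k == 2) t.

(* lowest common ancestor of the leaves in S: descend into the (unique, in an
   HC-tree) child containing all of S as long as possible. *)
Fixpoint lca (S : seq 'I_n) (t : tree n) : tree n :=
  match t with
  | Leaf _ => t
  | Node cs =>
      (fix go (cs : seq (tree n)) : tree n :=
         match cs with
         | [::] => t
         | c :: cs' => if all (fun v => v \in leaves c) S then lca S c else go cs'
         end) cs
  end.

Definition proper_desc (s u : tree n) : bool :=
  has (tree_eqb s) (strict_subtrees u).

Definition rel2 (T : tree n) (i j k : 'I_n) : bool :=
  proper_desc (lca [:: i; j] T) (lca [:: i; j; k] T).

Definition rel3 (T : tree n) (i j k : 'I_n) : bool :=
  tree_eqb (lca [:: i; j] T) (lca [:: i; j; k] T) &&
  tree_eqb (lca [:: j; k] T) (lca [:: i; j; k] T).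

End Trees.

Section Costs.
Variables (R : realType) (n : nat) (w : 'I_n -> 'I_n -> R).
Local Open Scope ring_scope.

Definition triplet_cost (T : tree n) (i j k : 'I_n) : R :=
  if rel2 T i j k then w i k + w j k
  else if rel2 T i k j then w i j + w j k
  else if rel2 T j k i then w i j + w i k
  else if rel3 T i j k then w i j + w j k + w i k
  else 0.

(* sums over unordered triples {i,j,k} of distinct indices: i < j < k *)
Definition TC (T : tree n) : R :=
  \sum_(i : 'I_n) \sum_(j : 'I_n | (i < j)%N) \sum_(k : 'I_n | (j < k)%N) triplet_cost T i j k.

Definition BC : R :=
  \sum_(i : 'I_n) \sum_(j : 'I_n | (i < j)%N) \sum_(k : 'I_n | (j < k)%N)
     Num.min (w i j + w i k) (Num.min (w i j + w j k) (w i k + w j k)).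

Definition rho (T : tree n) : \bar R :=
  if BC == 0 then (if TC T == 0 then 1%E else +oo%E)
  else ((TC T) / BC)%:E.

(* rho*_G = min over all HC-trees (the infimum is attained) *)
Definition rho_star : \bar R :=
  ereal_inf [set rho T | T in [set T : tree n | HC_tree T]].

End Costs.

(* In an HC-tree, {i,j|k} holds exactly when k is not a leaf below lca(i,j).
   The subtrees below the pairwise lcas of a triple are nested, so at most one of
   {i,j|k}, {i,k|j}, {j,k|i} holds, and when none does, {i|j|k} holds.  Hence every
   triple costs at least the minimum of its three pair sums: BC <= TC(T') for every
   HC-tree T', and rho* >= 1.  If T respects the constraints and {i,j|k} fails in T,
   then w_ij <= delta^2 max(w_ik, w_jk) <= delta^2 (w_ik + w_jk); in each of the four
   cases this bounds the cost of the triple by (delta^2 + 1) times its minimal pair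
   sum, so TC(T) <= (delta^2 + 1) BC and rho(T) <= delta^2 + 1 <= (delta^2 + 1) rho*. *)

From HB Require Import structures.
From mathcomp Require Import all_boot all_order all_algebra.
From mathcomp Require Import boolp classical_sets reals constructive_ereal ereal.
From mathcomp Require Import lra.
Set Implicit Arguments. Unset Strict Implicit. Unset Printing Implicit Defensive.
Import Order.TTheory GRing.Theory Num.Theory.

Section Trees.
Variable n : nat.
Implicit Types (s t u : tree n) (cs : seq (tree n)) (S : seq 'I_n).

Definition tree_nested_ind (P : tree n -> Prop) (PL : forall v, P (Leaf v))
    (PN : forall cs, foldr (fun c Q => P c /\ Q) True cs -> P (Node cs)) :
    forall t, P t :=
  fix F t := match t with
  | Leaf v => PL v
  | Node cs => PN cs ((fix G cs := match cs return foldr (fun c Q => P c /\ Q) True cs with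
                       | [::] => I | c :: cs' => conj (F c) (G cs') end) cs)
  end.

Lemma tree_eqbP : Equality.axiom (@tree_eqb n).
Proof.
move=> s t; apply: (iffP idP) => [|<-]; last first.
  elim/tree_nested_ind: s => [v|cs IH] /=; first exact: eqxx.
  by elim: cs IH => [|c cs IHc] //= [-> /IHc].
elim/tree_nested_ind: s t => [v|cs IH] [w|ds] //=; first by move/eqP->.
elim: cs ds IH => [|c cs IHc] [|d ds] //= [Hc /IHc IHds] /andP[/Hc -> /IHds[->]] //.
Qed.

HB.instance Definition _ := hasDecEq.Build (tree n) tree_eqbP.

Lemma tree_ind (P : tree n -> Prop) (PL : forall v, P (Leaf v))
    (PN : forall cs, (forall c, c \in cs -> P c) -> P (Node cs)) :
  forall t, P t.
Proof.
elim/tree_nested_ind => // cs IH; apply: PN.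
elim: cs IH => [|d cs IHcs] //= [Pd /IHcs Pcs] c.
by rewrite in_cons => /predU1P[->|/Pcs].
Qed.

Lemma subtreesE t u : (u \in subtrees t) = (u == t) || (u \in strict_subtrees t).
Proof. by case: t => [v|cs] /=; rewrite ?in_cons ?in_nil ?orbF. Qed.

Lemma subtrees_refl t : t \in subtrees t.
Proof. by rewrite subtreesE eqxx. Qed.

Lemma strict_subtrees_Node cs u :
  (u \in strict_subtrees (Node cs)) = has (fun c => u \in subtrees c) cs.
Proof. by apply/flatten_mapP/hasP => -[c cs_c u_c]; exists c. Qed.

Lemma subtrees_child cs c u : c \in cs -> u \in subtrees c -> u \in subtrees (Node cs).
Proof.
by move=> cs_c u_c; rewrite subtreesE strict_subtrees_Node; apply/orP; right; apply/hasP; exists c.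
Qed.

Lemma leaves_subtree t u : u \in subtrees t -> {subset leaves u <= leaves t}.
Proof.
elim/tree_ind: t => [v|cs IH]; first by rewrite inE => /eqP->.
rewrite subtreesE strict_subtrees_Node => /predU1P[->//|/hasP[c cs_c u_c]] x x_u.
by apply/flatten_mapP; exists c; last exact: IH x_u.
Qed.

Fixpoint tree_size t : nat :=
  if t is Node cs then (sumn (map tree_size cs)).+1 else 1.

Lemma tree_size_child cs c : c \in cs -> tree_size c < tree_size (Node cs).
Proof.
rewrite /= ltnS; elim: cs => [|d cs IH] //.
by rewrite in_cons => /predU1P[->|/IH]; [apply: leq_addr | move/leq_trans; apply; apply: leq_addl].
Qed.

Lemma tree_size_subtree t u : u \in subtrees t -> tree_size u <= tree_size t.
Proof.
elim/tree_ind: t => [v|cs IH]; first by rewrite inE => /eqP->.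
rewrite subtreesE strict_subtrees_Node => /predU1P[->//|/hasP[c cs_c u_c]].
exact/ltnW/(leq_ltn_trans (IH c cs_c u_c))/tree_size_child.
Qed.

Lemma tree_size_strict_subtree t u : u \in strict_subtrees t -> tree_size u < tree_size t.
Proof.
case: t => [//|cs]; rewrite strict_subtrees_Node => /hasP[c cs_c u_c].
exact: leq_ltn_trans (tree_size_subtree u_c) (tree_size_child cs_c).
Qed.

Lemma strict_subtrees_irr t : t \notin strict_subtrees t.
Proof. by apply/negP => /tree_size_strict_subtree; rewrite ltnn. Qed.

Lemma subtrees_anti t u : u \in subtrees t -> t \in subtrees u -> u = t.
Proof.
rewrite subtreesE => /predU1P[//|/tree_size_strict_subtree lt_ut /tree_size_subtree].
by rewrite leqNgt lt_ut.
Qed.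

Lemma proper_descE s u : proper_desc s u = (s \in strict_subtrees u).
Proof. by apply/hasP/idP => [[v ? /tree_eqbP->] // | ?]; exists s => //; apply/tree_eqbP. Qed.

Lemma uniq_leaves_child cs c : uniq (leaves (Node cs)) -> c \in cs -> uniq (leaves c).
Proof.
elim: cs => [|d cs IH] //=; rewrite cat_uniq in_cons => /and3P[uniq_d _ uniq_cs].
by case/predU1P=> [->|/IH]; last apply.
Qed.

Lemma children_leaf_eq cs c1 c2 x : uniq (leaves (Node cs)) -> c1 \in cs -> c2 \in cs ->
  x \in leaves c1 -> x \in leaves c2 -> c1 = c2.
Proof.
elim: cs => [|d cs IH] //=; rewrite cat_uniq !in_cons => /and3P[_ disj_d uniq_cs].
have notin_d c : c \in cs -> x \in leaves c -> x \notin leaves d.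
  move=> cs_c x_c; apply: contraNN disj_d => x_d.
  by apply/hasP; exists x => //; apply/flatten_mapP; exists c.
case/predU1P=> [->|cs_c1] /predU1P[->|cs_c2] x_c1 x_c2 //.
- by rewrite (negPf (notin_d _ cs_c2 x_c2)) in x_c1.
- by rewrite (negPf (notin_d _ cs_c1 x_c1)) in x_c2.
- exact: IH.
Qed.

Fixpoint lca_children S t0 cs : tree n :=
  if cs is c :: cs' then
    if all (fun v => v \in leaves c) S then lca S c else lca_children S t0 cs'
  else t0.

Lemma lca_Node S cs : lca S (Node cs) = lca_children S (Node cs) cs.
Proof. by rewrite /=; move: (Node cs) => t0; elim: cs => //= c cs ->. Qed.

Lemma lca_subtree S t : lca S t \in subtrees t.
Proof.
elim/tree_ind: t => [v|cs IH]; first exact: subtrees_refl.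
rewrite lca_Node; suff: forall ds, {subset ds <= cs} ->
  lca_children S (Node cs) ds \in subtrees (Node cs) by apply.
elim=> [|d ds IHds] sub_cs /=; first exact: subtrees_refl.
have cs_d : d \in cs by apply: sub_cs; apply: mem_head.
case: ifP => _; first exact: subtrees_child cs_d (IH d cs_d).
by apply: IHds => c ds_c; apply: sub_cs; rewrite in_cons ds_c orbT.
Qed.

Lemma lca_leaves S t : {subset S <= leaves t} -> {subset S <= leaves (lca S t)}.
Proof.
elim/tree_ind: t => [//|cs IH] S_t; rewrite lca_Node; suff: forall ds,
  {subset ds <= cs} -> {subset S <= leaves (lca_children S (Node cs) ds)} by apply.
elim=> [//|d ds IHds] sub_cs /=.
case: ifP => [/allP S_d|_]; first by apply: IH S_d; apply: sub_cs; apply: mem_head.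
by apply: IHds => c ds_c; apply: sub_cs; rewrite in_cons ds_c orbT.
Qed.

Lemma lca_lowest S t u x : uniq (leaves t) -> x \in S -> u \in subtrees t ->
  {subset S <= leaves u} -> lca S t \in subtrees u.
Proof.
move=> + S_x; elim/tree_ind: t u => [v|cs IH] u uniq_t.
  by rewrite inE => /eqP-> _; apply: subtrees_refl.
rewrite subtreesE => /predU1P[-> _|]; first exact: lca_subtree.
rewrite strict_subtrees_Node => /hasP[c cs_c u_c] S_u.
have S_c : {subset S <= leaves c} by move=> y /S_u; apply: leaves_subtree.
rewrite lca_Node; suff: forall ds, c \in ds -> {subset ds <= cs} ->
  lca_children S (Node cs) ds \in subtrees u by apply.
elim=> [//|d ds IHds] /= ds_c sub_cs; have cs_d : d \in cs by apply: sub_cs; apply: mem_head.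
case: ifP => [/allP S_d|S_d].
  have dc : d = c by apply: children_leaf_eq uniq_t cs_d cs_c (S_d x S_x) (S_c x S_x).
  by rewrite dc; apply: IH (uniq_leaves_child uniq_t cs_c) u_c S_u.
apply: IHds => [|e ds_e]; last by apply: sub_cs; rewrite in_cons ds_e orbT.
by case/predU1P: ds_c => // cd; rewrite -cd (introT allP S_c) in S_d.
Qed.

Lemma subtrees_nested t u v x : uniq (leaves t) -> u \in subtrees t -> v \in subtrees t ->
  x \in leaves u -> x \in leaves v -> (u \in subtrees v) || (v \in subtrees u).
Proof.
elim/tree_ind: t u v => [w|cs IH] u v uniq_t.
  by rewrite !inE => /eqP-> /eqP->; rewrite subtrees_refl.
rewrite (subtreesE _ u) => /predU1P[-> v_t _ _|]; first by rewrite v_t orbT.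
rewrite (subtreesE _ v) => u_t /predU1P[-> _ _|]; first by rewrite subtreesE u_t orbT.
move: u_t; rewrite !strict_subtrees_Node => /hasP[c1 cs_c1 u_c1] /hasP[c2 cs_c2 v_c2] x_u x_v.
have c12 : c1 = c2.
  exact: children_leaf_eq uniq_t cs_c1 cs_c2 (leaves_subtree u_c1 x_u) (leaves_subtree v_c2 x_v).
rewrite -c12 in v_c2; exact: IH cs_c1 _ _ (uniq_leaves_child uniq_t cs_c1) u_c1 v_c2 x_u x_v.
Qed.

Section LeafLabelled.
Variable t : tree n.
Hypothesis t_uniq : uniq (leaves t).
Hypothesis t_leaves : forall v, v \in leaves t.

Lemma lca_leaves_all S : {subset S <= leaves (lca S t)}.
Proof. exact: lca_leaves (fun v _ => t_leaves v). Qed.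

Lemma lca_subtree_lca S S' x : x \in S -> {subset S <= S'} -> lca S t \in subtrees (lca S' t).
Proof.
move=> S_x sub_SS'; apply: lca_lowest t_uniq S_x (lca_subtree _ _) _.
by move=> y /sub_SS'; apply: lca_leaves_all.
Qed.

Lemma lca_eq_lca S S' x : x \in S -> {subset S <= S'} ->
  (lca S t == lca S' t) = all (fun v => v \in leaves (lca S t)) S'.
Proof.
move=> S_x sub_SS'; apply/eqP/allP => [->|S'_S]; first exact: lca_leaves_all.
apply: subtrees_anti (lca_subtree_lca S_x sub_SS') _.
exact: lca_lowest t_uniq (sub_SS' x S_x) (lca_subtree S t) S'_S.
Qed.

Lemma proper_desc_lca S S' x : x \in S -> {subset S <= S'} ->
  proper_desc (lca S t) (lca S' t) = (lca S t != lca S' t).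
Proof.
move=> S_x sub_SS'; rewrite proper_descE.
have := lca_subtree_lca S_x sub_SS'; rewrite subtreesE.
case: eqP => [->|_] /= strict; first by rewrite (negPf (strict_subtrees_irr _)).
by rewrite strict.
Qed.

Lemma lca_pair_leaves x y :
  (x \in leaves (lca [:: x; y] t)) && (y \in leaves (lca [:: x; y] t)).
Proof. by apply/andP; split; apply: lca_leaves_all; rewrite !inE eqxx ?orbT. Qed.

Lemma rel2E x y z : rel2 t x y z = (z \notin leaves (lca [:: x; y] t)).
Proof.
have sub_xy := mem_subseq (prefix_subseq [:: x; y] [:: z]).
rewrite /rel2 (proper_desc_lca (mem_head x _) sub_xy) (lca_eq_lca (mem_head x _) sub_xy) /=.
by case/andP: (lca_pair_leaves x y) => -> ->; rewrite andbT.
Qed.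

Lemma rel3E x y z :
  rel3 t x y z = (z \in leaves (lca [:: x; y] t)) && (x \in leaves (lca [:: y; z] t)).
Proof.
have sub_xy := mem_subseq (prefix_subseq [:: x; y] [:: z]).
have sub_yz := mem_subseq (subseq_cons [:: y; z] x).
rewrite /rel3 -[tree_eqb _ _]/(_ == _) -[tree_eqb (lca [:: y; z] t) _]/(_ == _).
rewrite (lca_eq_lca (mem_head x _) sub_xy) (lca_eq_lca (mem_head y _) sub_yz) /=.
case/andP: (lca_pair_leaves x y) => -> ->; case/andP: (lca_pair_leaves y z) => -> ->.
by rewrite !andbT andbC.
Qed.

Lemma lca_nested S S' x : x \in S -> x \in S' ->
  {subset S <= leaves (lca S' t)} \/ {subset S' <= leaves (lca S t)}.
Proof.
move=> S_x S'_x.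
have := subtrees_nested t_uniq (lca_subtree S t) (lca_subtree S' t)
  (lca_leaves_all S_x) (lca_leaves_all S'_x).
by case/orP=> sub; [left | right] => v /lca_leaves_all; apply: leaves_subtree.
Qed.

Lemma rel2_excl x y z x' y' z' v : v \in [:: x; y] -> v \in [:: x'; y'] ->
  z \in [:: x'; y'] -> z' \in [:: x; y] -> rel2 t x y z -> ~~ rel2 t x' y' z'.
Proof.
rewrite !rel2E negbK => xy_v xy'_v xy'_z xy_z' z_xy.
by case: (lca_nested xy_v xy'_v) => sub; [apply: sub | apply: contraNT z_xy => _; apply: sub].
Qed.

Lemma rel_cover x y z : [|| rel2 t x y z, rel2 t x z y, rel2 t y z x | rel3 t x y z].
Proof. by rewrite rel3E !rel2E; do 3!case: (_ \in leaves _). Qed.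

End LeafLabelled.

Lemma HC_tree_uniq t : HC_tree t -> uniq (leaves t).
Proof. by case/andP => /perm_uniq -> _; apply: enum_uniq. Qed.

Lemma HC_tree_leaves t : HC_tree t -> forall v, v \in leaves t.
Proof. by case/andP => /perm_mem leaves_t _ v; rewrite leaves_t mem_enum. Qed.

End Trees.

Local Open Scope ring_scope.

Section MinPairSum.
Variable R : realFieldType.
Implicit Types a b c d x y z : R.

Definition min_pair_sum a b c := Num.min (a + b) (Num.min (a + c) (b + c)).

Lemma min_pair_sumC a b c : min_pair_sum b a c = min_pair_sum a b c.
Proof. by rewrite /min_pair_sum (addrC b a) [Num.min (b + c) _]minC. Qed.

Lemma min_pair_sum_rotl a b c : min_pair_sum c a b = min_pair_sum a b c.
Proof.
by apply/le_anti; rewrite /min_pair_sum (addrC c a) (addrC c b) !(le_min, ge_min) !lexx !orbT.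
Qed.

Lemma ler_mul_max_sum d x y z : 0 <= d -> 0 <= y -> 0 <= z ->
  x <= d * Num.max y z -> x <= d * (y + z).
Proof.
move=> d_ge0 y_ge0 z_ge0 /le_trans; apply; apply: ler_wpM2l => //.
by rewrite ge_max lerDl lerDr z_ge0 y_ge0.
Qed.

Lemma pair_sum_le_min_pair_sum d a b c : 0 <= d -> 0 <= a -> 0 <= b -> 0 <= c ->
  b <= d * (a + c) -> c <= d * (a + b) -> b + c <= (d + 1) * min_pair_sum a b c.
Proof.
move=> d_ge0 a_ge0 b_ge0 c_ge0 b_le c_le; have d1_ge0 : 0 <= d + 1 by lra.
have dbc_ge0 : 0 <= d * (b + c) by rewrite mulr_ge0 ?addr_ge0.
by rewrite /min_pair_sum !minr_pMr // !le_min; apply/and3P; split; lra.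
Qed.

Lemma triple_sum_le_min_pair_sum d a b c : 0 <= d ->
  a <= d * (b + c) -> b <= d * (a + c) -> c <= d * (a + b) ->
  a + b + c <= (d + 1) * min_pair_sum a b c.
Proof.
move=> d_ge0 a_le b_le c_le; have d1_ge0 : 0 <= d + 1 by lra.
by rewrite /min_pair_sum !minr_pMr // !le_min; apply/and3P; split; lra.
Qed.

End MinPairSum.

Section Costs.
Variables (R : realType) (n : nat) (w : 'I_n -> 'I_n -> R).
Hypothesis w_sym : forall i j, w i j = w j i.
Hypothesis w_ge0 : forall i j, 0 <= w i j.

Lemma min_pair_sum_ge0 i j k : 0 <= min_pair_sum (w i j) (w i k) (w j k).
Proof. by rewrite /min_pair_sum !le_min !addr_ge0. Qed.

Lemma min_pair_sum_le_triplet_cost T i j k : HC_tree T ->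
  min_pair_sum (w i j) (w i k) (w j k) <= triplet_cost w T i j k.
Proof.
move=> T_HC; have := rel_cover (HC_tree_uniq T_HC) (HC_tree_leaves T_HC) i j k.
rewrite /triplet_cost /min_pair_sum.
case: ifP => [_ _|_ /=]; first by rewrite !ge_min lexx ?orbT.
case: ifP => [_ _|_ /=]; first by rewrite !ge_min lexx ?orbT.
case: ifP => [_ _|_ /= ->]; first by rewrite !ge_min lexx ?orbT.
by apply: ler_wpDr; rewrite ?w_ge0 // !ge_min lexx ?orbT.
Qed.

Lemma BC_ge0 : 0 <= BC w.
Proof. by rewrite /BC; do 3!apply: sumr_ge0 => ? _; apply: min_pair_sum_ge0. Qed.

Lemma BC_le_TC T : HC_tree T -> BC w <= TC w T.
Proof.
move=> T_HC; rewrite /TC /BC; do 3!apply: ler_sum => ? _.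
exact: min_pair_sum_le_triplet_cost.
Qed.

Lemma rho_ge1 T : HC_tree T -> (1 <= rho w T)%E.
Proof.
move=> T_HC; rewrite /rho; case: eqP => [_|/eqP BC_neq0].
  by case: eqP => // _; rewrite leey.
have BC_gt0 : 0 < BC w by rewrite lt_def BC_neq0 BC_ge0.
by rewrite lee_fin ler_pdivlMr // mul1r BC_le_TC.
Qed.

Lemma rho_star_ge1 : (1 <= rho_star w)%E.
Proof. by apply: le_ereal_inf_tmp => _ [T T_HC <-]; apply: rho_ge1. Qed.

Lemma rho_le_of_TC_le c T : HC_tree T -> 1 <= c -> TC w T <= c * BC w ->
  (rho w T <= c%:E)%E.
Proof.
move=> T_HC c_ge1 TC_le; rewrite /rho; case: eqP => [BC_eq0|/eqP BC_neq0].
  have -> : TC w T == 0.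
    by rewrite eq_le -{2}BC_eq0 BC_le_TC // andbT; rewrite BC_eq0 mulr0 in TC_le.
  by rewrite lee_fin.
have BC_gt0 : 0 < BC w by rewrite lt_def BC_neq0 BC_ge0.
by rewrite lee_fin ler_pdivrMr.
Qed.

Section ConsistentTree.
Variables (d : R) (T : tree n).
Hypothesis d_ge0 : 0 <= d.
Hypothesis T_HC : HC_tree T.
Hypothesis T_consistent : forall i j k, i != j -> i != k -> j != k ->
  d * Num.max (w i k) (w j k) < w i j -> rel2 T i j k.

Lemma weight_le_of_not_rel2 i j k : i != j -> i != k -> j != k ->
  ~~ rel2 T i j k -> w i j <= d * (w i k + w j k).
Proof.
move=> ij ik jk not_rel2; apply: ler_mul_max_sum; rewrite ?w_ge0 //.
by rewrite leNgt; apply: contra not_rel2; apply: T_consistent.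
Qed.

Lemma triplet_cost_le_min_pair_sum i j k : i != j -> i != k -> j != k ->
  triplet_cost w T i j k <= (d + 1) * min_pair_sum (w i j) (w i k) (w j k).
Proof.
move=> ij ik jk.
have le_ij := weight_le_of_not_rel2 ij ik jk.
have le_ik : ~~ rel2 T i k j -> w i k <= d * (w i j + w j k).
  by rewrite (w_sym j k); apply: weight_le_of_not_rel2; rewrite // eq_sym.
have le_jk : ~~ rel2 T j k i -> w j k <= d * (w i j + w i k).
  by rewrite (w_sym i j) (w_sym i k); apply: weight_le_of_not_rel2; rewrite // eq_sym.
have [T_uniq T_leaves] := (HC_tree_uniq T_HC, HC_tree_leaves T_HC).
rewrite /triplet_cost; case: ifP => [rel_ijk|/negbT nrel_ijk].
  apply: pair_sum_le_min_pair_sum => //.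
    apply: le_ik; apply: (rel2_excl T_uniq T_leaves (v := i)) rel_ijk;
    by rewrite !inE eqxx ?orbT.
  apply: le_jk; apply: (rel2_excl T_uniq T_leaves (v := j)) rel_ijk;
  by rewrite !inE eqxx ?orbT.
case: ifP => [rel_ikj|/negbT nrel_ikj].
  rewrite -min_pair_sumC; apply: pair_sum_le_min_pair_sum; rewrite ?le_ij // addrC.
  apply: le_jk; apply: (rel2_excl T_uniq T_leaves (v := k)) rel_ikj;
  by rewrite !inE eqxx ?orbT.
case: ifP => [_|/negbT nrel_jki].
  rewrite -min_pair_sum_rotl; apply: pair_sum_le_min_pair_sum;
    by rewrite ?(addrC (w j k)) ?le_ij ?le_ik.
case: ifP => _; last by rewrite mulr_ge0 ?min_pair_sum_ge0 ?addr_ge0.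
by rewrite addrAC; apply: triple_sum_le_min_pair_sum; rewrite ?le_ij ?le_ik ?le_jk.
Qed.

Lemma TC_le_BC : TC w T <= (d + 1) * BC w.
Proof.
have neq_of_lt (a b : 'I_n) : (a < b)%N -> a != b.
  by move=> ab; apply: contraTneq ab => ->; rewrite ltnn.
rewrite /TC /BC mulr_sumr; apply: ler_sum => i _; rewrite mulr_sumr.
apply: ler_sum => j ij; rewrite mulr_sumr; apply: ler_sum => k jk.
by apply: triplet_cost_le_min_pair_sum; rewrite neq_of_lt // (ltn_trans ij jk).
Qed.

End ConsistentTree.
End Costs.

Unset Implicit Arguments.

Theorem lemma7 (R : realType) (n : nat) (w : 'I_n -> 'I_n -> R) (delta : R)
  (hdelta : 1 <= delta)
  (hsym : forall i j, w i j = w j i)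
  (hnn : forall i j, 0 <= w i j)
  (T : tree n)
  (hT : binary_HC_tree T)
  (hcons : forall i j k : 'I_n, i != j -> i != k -> j != k ->
     delta ^+ 2 * Num.max (w i k) (w j k) < w i j -> rel2 T i j k) :
  (rho w T <= (delta ^+ 2 + 1)%:E * rho_star w)%E.
Proof.
have d_ge0 : 0 <= delta ^+ 2 := sqr_ge0 delta.
have T_HC : HC_tree T by case/andP: hT.
have rho_T : (rho w T <= (delta ^+ 2 + 1)%:E)%E.
  apply: rho_le_of_TC_le => //; first by rewrite lerDr.
  exact: TC_le_BC.
apply: le_trans rho_T _; rewrite -{1}(mule1 (_ + 1)%:E).
by apply: lee_wpmul2l; [rewrite lee_fin addr_ge0 | apply: rho_star_ge1].
Qed.
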